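(* Every irreducible $\lambda$-quiddity over the ring $(\mathbb{Z}/2\mathbb{Z})\times(\mathbb{Z}/4\mathbb{Z})$ has size $3$, $4$ or $6$.
   Context: For $a_1,\ldots,a_n$ in a commutative unital ring $A$, $M_n(a_1,\ldots,a_n)=\begin{pmatrix}a_n&-1\\1&0\end{pmatrix}\cdots\begin{pmatrix}a_1&-1\\1&0\end{pmatrix}$. An $n$-tuple $(a_1,\ldots,a_n)\in A^n$ is a $\lambda$-quiddity over $A$ of size $n$ if $M_n(a_1,\ldots,a_n)=\pm\mathrm{Id}$. For $(a_1,\ldots,a_n)\in A^n$, $(b_1,\ldots,b_m)\in A^m$, define $(a_1,\ldots,a_n)\oplus(b_1,\ldots,b_m)=(a_1+b_m,a_2,\ldots,a_{n-1},a_n+b_1,b_2,\ldots,b_{m-1})$. Write $(a_1,\ldots,a_n)\sim(b_1,\ldots,b_n)$ if $(b_1,\ldots,b_n)$ is obtained from $(a_1,\ldots,a_n)$ or from $(a_n,\ldots,a_1)$ by a cyclic permutation. A $\lambda$-quiddity $(c_1,\ldots,c_n)$ with $n\ge3$ is reducible if there exist a $\lambda$-quiddity $(b_1,\ldots,b_l)$ and a tuple $(a_1,\ldots,a_m)$ with $l,m\ge3$ and $(c_1,\ldots,c_n)\sim(a_1,\ldots,a_m)\oplus(b_1,\ldots,b_l)$; it is irreducible otherwise (by convention $(0,0)$ is reducible). *)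

From HB Require Import structures.
From mathcomp Require Import all_boot all_order all_algebra.
Set Implicit Arguments. Unset Strict Implicit. Unset Printing Implicit Defensive.
Import Order.TTheory GRing.Theory Num.Theory.
Local Open Scope ring_scope.

Definition Z2Z4 : comNzRingType := ('Z_2 * 'Z_4)%type.

Section Quiddity.
Variable A : comNzRingType.

Definition qmat (a : A) : 'M[A]_2 :=
  \matrix_(i < 2, j < 2)
    (if i == 0 :> nat then (if j == 0 :> nat then a else -1)
     else (if j == 0 :> nat then 1 else 0)).

(* M_n(a_1,...,a_n) = qmat a_n * ... * qmat a_1 ; for s = [:: a_1; ...; a_n]. *)
Definition Mq (s : seq A) : 'M[A]_2 :=
  foldl (fun M a => qmat a *m M) 1%:M s.

Definition lambda_quiddity (s : seq A) : Prop :=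
  Mq s = 1%:M \/ Mq s = - 1%:M.

(* (a_1,...,a_n) (+) (b_1,...,b_m)
   = (a_1+b_m, a_2, ..., a_{n-1}, a_n+b_1, b_2, ..., b_{m-1}) *)
Definition qsum (a b : seq A) : seq A :=
  let n := size a in let m := size b in
  [:: nth 0 a 0 + nth 0 b m.-1]
  ++ take (n - 2) (drop 1 a)
  ++ [:: nth 0 a n.-1 + nth 0 b 0]
  ++ take (m - 2) (drop 1 b).

Definition qequiv (c d : seq A) : Prop :=
  exists k : nat, d = rot k c \/ d = rot k (rev c).

Definition reducible (c : seq A) : Prop :=
  c = [:: 0; 0] \/
  (3 <= size c)%N /\
  exists a b : seq A, [/\ lambda_quiddity b, (3 <= size b)%N, (3 <= size a)%N
                       & qequiv c (qsum a b)].

(* Irreducible lambda-quiddity: a lambda-quiddity of size n >= 3 which is not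
   reducible (the only size-2 lambda-quiddity is (0,0), reducible by convention). *)
Definition irreducible_quiddity (c : seq A) : Prop :=
  [/\ lambda_quiddity c, (3 <= size c)%N & ~ reducible c].

End Quiddity.

(* A block w of cyclically consecutive entries of c with [Mq w 0 0 = +-1] that
   leaves at least three other entries d extends to a lambda-quiddity (u, w, v),
   and c is then a rotation of (d_1 - v, ..., d_m - u) (+) (u, w, v), hence
   reducible.  Over (Z/2Z) x (Z/4Z), where the units are exactly +-1, a finite
   computation shows that any four consecutive entries contain such a block,
   and that every lambda-quiddity of size 5 contains one of length at most 2;
   so irreducible lambda-quiddities have neither size 5 nor size >= 7. *)

From mathcomp Require Import all_boot all_order all_algebra.
From mathcomp Require Import ring zify.
Set Implicit Arguments.
Unset Strict Implicit.
Unset Printing Implicit Defensive.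
Import GRing.Theory.
Local Open Scope ring_scope.

Section Quiddity.
Variable A : comNzRingType.
Implicit Types (s w : seq A) (x e : A).

Definition pm1 x : bool := (x == 1) || (x == -1).

Lemma sum_ord2 (F : 'I_2 -> A) : \sum_(i < 2) F i = F 0 + F 1.
Proof. by rewrite !big_ord_recl big_ord0 addr0; congr (_ + F _); apply: val_inj. Qed.

Lemma qmat_mulmxE x (M : 'M[A]_2) i j :
  (qmat x *m M) i j = if i == 0 then x * M 0 j - M 1 j else M 0 j.
Proof.
rewrite mxE sum_ord2 !mxE /=.
by case: i => [[|[|i]] ?] //=; rewrite ?mulNr mul1r ?mul0r ?addr0.
Qed.

Lemma mulmx_qmatE x (M : 'M[A]_2) i j :
  (M *m qmat x) i j = if j == 0 then M i 0 * x + M i 1 else - M i 0.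
Proof.
rewrite mxE sum_ord2 !mxE /=.
by case: j => [[|[|j]] ?] //=; rewrite ?mulr1 // mulrN1 mulr0 addr0.
Qed.

Lemma Mq_rcons s x : Mq (rcons s x) = qmat x *m Mq s.
Proof. by rewrite /Mq foldl_rcons. Qed.

Lemma Mq_cons s x : Mq (x :: s) = Mq s *m qmat x.
Proof.
elim/last_ind: s => [|s y IH]; first by rewrite /Mq /= mulmx1 mul1mx.
by rewrite -rcons_cons !Mq_rcons IH mulmxA.
Qed.

Lemma Mq_det s : Mq s 0 0 * Mq s 1 1 - Mq s 0 1 * Mq s 1 0 = 1.
Proof.
elim/last_ind: s => [|s x IH]; first by rewrite /Mq /= !mxE /= mulr1 mulr0 subr0.
by rewrite Mq_rcons !qmat_mulmxE /= -IH; ring.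
Qed.

(* [qmat v *m Mq w *m qmat u = e%:M] means [Mq w = e *: [[-1, u], [-v, uv - 1]]];
   given [det (Mq w) = 1] and [e * e = 1], the entry [Mq w 1 1] then takes care
   of itself, and the off-diagonal entries force the values of [u] and [v]. *)
Lemma Mq_extend_scalar w e : e * e = 1 -> Mq w 0 0 = - e ->
  Mq (e * Mq w 0 1 :: rcons w (- e * Mq w 1 0)) = e%:M.
Proof.
move=> ee w00; have := Mq_det w; rewrite w00 => det1.
have t_eq : Mq w 1 1 = - e - e * Mq w 0 1 * Mq w 1 0.
  have et : e * Mq w 1 1 = -1 - Mq w 0 1 * Mq w 1 0 by rewrite -det1; ring.
  by rewrite -[Mq w 1 1]mul1r -ee -mulrA et; ring.
have mod_ee a b c : a - b = c * (e * e - 1) -> a = b.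
  by rewrite ee subrr mulr0 => /eqP; rewrite subr_eq0 => /eqP.
apply/matrixP => i j; rewrite Mq_cons Mq_rcons !mulmx_qmatE !qmat_mulmxE !mxE /=.
case: i => [[|[|i]] ?] //=; case: j => [[|[|j]] ?] //=; rewrite w00 ?t_eq ?mulr1n ?mulr0n.
- by apply: (mod_ee _ _ (e * Mq w 1 0 * Mq w 0 1)); ring.
- by apply: (mod_ee _ _ (- Mq w 1 0)); ring.
- by apply: (mod_ee _ _ (- Mq w 0 1)); ring.
- exact: opprK.
Qed.

Lemma qsum_cons_rcons (p q u v : A) (mid w : seq A) :
  qsum (p :: rcons mid q) (u :: rcons w v) = (p + v) :: mid ++ (q + u) :: w.
Proof.
rewrite /qsum /= !size_rcons /= !nth_rcons !ltnn !eqxx /= !drop0 !subn2 /=.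
by rewrite -!cats1 !take_size_cat.
Qed.

Lemma exists_rot_rot m n (s : seq A) : exists j, rot m (rot n s) = rot j s.
Proof.
have [/rot_oversize->|/ltnW n_le] := leqP (size s) n; first by exists m.
have [m_ge|/ltnW m_le] := leqP (size s) m.
  by exists n; rewrite rot_oversize ?size_rot.
by eexists; rewrite rot_add_mod.
Qed.

Lemma reducible_of_pm1_block c k w d : rot k c = w ++ d ->
  (0 < size w)%N -> (3 <= size d)%N -> pm1 (Mq w 0 0) -> reducible c.
Proof.
move=> ck w_gt0 d_ge3 w00_pm1; right; split.
  by rewrite -(size_rot k) ck size_cat (leq_trans d_ge3) ?leq_addl.
have [e [ee w00 e_pm1]] :
    exists e, [/\ e * e = 1, Mq w 0 0 = - e & e = 1 \/ e = -1].
  case/orP: w00_pm1 => /eqP->; [exists (-1) | exists 1];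
    by rewrite ?mulrNN ?opprK mulr1; split; auto.
case: d d_ge3 ck => [|p [|d0 d]] // d_ge3 ck.
case/lastP: d d_ge3 ck => [|mid q] // _ ck.
set u := e * Mq w 0 1; set v := - e * Mq w 1 0.
exists ((p - v) :: rcons (d0 :: mid) (q - u)), (u :: rcons w v); split.
- rewrite /lambda_quiddity Mq_extend_scalar //.
  by case: e_pm1 => ->; [left | right; rewrite raddfN].
- by rewrite /= size_rcons.
- by rewrite /= size_rcons.
- have [j rot_j] := exists_rot_rot (size w) k c.
  by exists j; left; rewrite -rot_j ck rot_size_cat qsum_cons_rcons !subrK /= cat_rcons.
Qed.

(* The first column of [Mq s], computed without matrices so that [vm_compute]
   can evaluate it. *)
Definition Mq_col s : A * A := foldl (fun p x => (x * p.1 - p.2, p.1)) (1, 0) s.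

Lemma Mq_colE s : Mq_col s = (Mq s 0 0, Mq s 1 0).
Proof.
elim/last_ind: s => [|s x IH]; first by rewrite /Mq_col /Mq /= !mxE.
by rewrite /Mq_col foldl_rcons -/(Mq_col s) IH Mq_rcons !qmat_mulmxE.
Qed.

Lemma lambda_quiddity_col s : lambda_quiddity s -> Mq_col s \in [:: (1, 0); (-1, 0)].
Proof. by rewrite Mq_colE => -[]->; rewrite !mxE /= ?oppr0 !inE eqxx ?orbT. Qed.

Lemma reducible_of_pm1_window c k l : (0 < l)%N -> (l + 3 <= size c)%N ->
  pm1 (Mq_col (take l (rot k c))).1 -> reducible c.
Proof.
move=> l_gt0 lc; rewrite Mq_colE /=.
have l_le : (l <= size (rot k c))%N by rewrite size_rot; lia.
apply: (reducible_of_pm1_block (esym (cat_take_drop l (rot k c)))).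
- by rewrite size_takel.
- by rewrite size_drop size_rot; lia.
Qed.
End Quiddity.

Lemma take_rot_take (T : Type) (s : seq T) k l n : (k + l <= n)%N -> (n <= size s)%N ->
  take l (rot k s) = take l (drop k (take n s)).
Proof.
case: l => [|l] kln ns; first by rewrite !take0.
rewrite /rot takel_cat; last by rewrite size_drop; lia.
rewrite -{1}(cat_take_drop n s) drop_cat size_takel // ifT; last by lia.
by rewrite takel_cat // size_drop size_takel //; lia.
Qed.

Definition Z2Z4_elems : seq Z2Z4 :=
  [seq (inZp i, inZp j) | i <- iota 0 2, j <- iota 0 4].

Lemma mem_Z2Z4_elems x : x \in Z2Z4_elems.
Proof.
by case: x => [[[|[|a]] a_lt] [[|[|[|[|b]]]] b_lt]].
Qed.

Fixpoint Z2Z4_words n : seq (seq Z2Z4) :=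
  if n is n'.+1 then [seq x :: s | x <- Z2Z4_elems, s <- Z2Z4_words n'] else [:: [::]].

Lemma mem_Z2Z4_words s : s \in Z2Z4_words (size s).
Proof.
by elim: s => [|x s IH] //; apply: allpairs_f; rewrite ?mem_Z2Z4_elems.
Qed.

Lemma Z2Z4_pm1_window4 (s : seq Z2Z4) : size s = 4%N ->
  exists k l, [/\ (0 < l)%N, (k + l <= 4)%N & pm1 (Mq_col (take l (drop k s))).1].
Proof.
have windows : all (fun s => has (fun k => has (fun l =>
    pm1 (Mq_col (take l (drop k s))).1) (iota 1 (4 - k))) (iota 0 4)) (Z2Z4_words 4).
  by vm_compute.
move=> s4; have := allP windows s; rewrite -{1}s4 mem_Z2Z4_words => /(_ isT).
case/hasP=> k; rewrite mem_iota => _ /hasP [l]; rewrite mem_iota => l_range w.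
have [l_gt0 kl] : (0 < l)%N /\ (k + l <= 4)%N by clear -l_range; lia.
by exists k, l; exact: And3 l_gt0 kl w.
Qed.

Lemma Z2Z4_pm1_window5 (s : seq Z2Z4) : size s = 5%N ->
  Mq_col s \in [:: (1, 0); (-1, 0)] ->
  exists k l, [/\ (0 < l)%N, (l <= 2)%N & pm1 (Mq_col (take l (rot k s))).1].
Proof.
have windows : all (fun s => (Mq_col s \in [:: (1, 0); (-1, 0)]) ==> has (fun k =>
    has (fun l => pm1 (Mq_col (take l (rot k s))).1) (iota 1 2)) (iota 0 5))
    (Z2Z4_words 5).
  by vm_compute.
move=> s5 quid; have := allP windows s; rewrite -{1}s5 mem_Z2Z4_words quid => /(_ isT).
case/hasP=> k _ /hasP [l]; rewrite mem_iota => /andP [l_gt0 l_lt3] w.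
by exists k, l; exact: And3 l_gt0 l_lt3 w.
Qed.

Local Close Scope ring_scope.

Theorem proposition4p3 (c : seq Z2Z4) :
  irreducible_quiddity c -> size c \in [:: 3; 4; 6].
Proof.
case=> quid c_ge3 irred.
have [c5|c_ne5] := eqVneq (size c) 5.
  have [k [l [l_gt0 l_le2 w]]] := Z2Z4_pm1_window5 c5 (lambda_quiddity_col quid).
  by case: irred; apply: (reducible_of_pm1_window l_gt0 _ w); rewrite c5; clear -l_le2; lia.
have [c_le6|c_gt6] := leqP (size c) 6.
  by move: c_ge3 c_le6 c_ne5; case: (size c) => [|[|[|[|[|[|[|n]]]]]]].
have c4 : (4 <= size c)%N by clear -c_gt6; lia.
have [k [l [l_gt0 kl w]]] := Z2Z4_pm1_window4 (size_takel c4).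
case: irred; apply: (reducible_of_pm1_window (k := k) l_gt0).
  by clear -kl c_gt6; lia.
by rewrite (take_rot_take kl c4); exact: w.
Qed.
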